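(* Let $D$ be a division algebra and let $\sigma_1,\sigma_2$ be two commuting automorphisms of $D$. In the skew polynomial ring $T=D[t_1,t_2;\sigma_1,\sigma_2]$, let $I$ be the two-sided ideal generated by $t_1t_2$, and let $S=T/I$. Then every two commuting elements of $S$ are (left) algebraically dependent over $D$.
   Context: $D[t_1,t_2;\sigma_1,\sigma_2]$ is the skew polynomial ring in two commuting variables with $t_ia=\sigma_i(a)t_i$ for $a\in D$. Commuting elements $x_1,x_2$ of a ring $S\supseteq D$ are (left) algebraically dependent over $D$ if the set of monomials $\{x_1^{i_1}x_2^{i_2}:(i_1,i_2)\in\mathbb{Z}_{\ge0}^2\}$ is not left linearly independent over $D$ (in particular if two distinct exponent pairs give the same monomial). *)

From HB Require Import structures.
From mathcomp Require Import all_boot all_order all_algebra.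
Set Implicit Arguments. Unset Strict Implicit. Unset Printing Implicit Defensive.
Import Order.TTheory GRing.Theory.
Local Open Scope ring_scope.

(* Elements of the skew polynomial ring T = D[t1,t2; s1,s2] are represented by
   their coefficient functions  f : nat -> nat -> D  (f i j = coefficient of
   t1^i t2^j, written on the left), subject to finite support.  The operations
   below are defined on all coefficient functions (skew power series), and the
   ring T is the subset of finitely supported ones. *)

Definition skf (D : Type) := nat -> nat -> D.

Definition finsupp (D : nzRingType) (f : skf D) : Prop :=
  exists N : nat, forall i j : nat, (N <= i + j)%N -> f i j = 0.

Definition sk_add (D : nzRingType) (f g : skf D) : skf D :=
  fun i j => f i j + g i j.

Definition sk_sub (D : nzRingType) (f g : skf D) : skf D :=
  fun i j => f i j - g i j.

Definition sk_zero (D : nzRingType) : skf D := fun _ _ => 0.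

Definition sk_C (D : nzRingType) (c : D) : skf D :=
  fun i j => if (i == 0%N) && (j == 0%N) then c else 0.

Definition sk_t1t2 (D : nzRingType) : skf D :=
  fun i j => if (i == 1%N) && (j == 1%N) then 1 else 0.

(* skew multiplication:  (a t1^i t2^j)(b t1^k t2^l)
                        = a s1^i(s2^j(b)) t1^(i+k) t2^(j+l) *)
Definition sk_mul (D : nzRingType) (s1 s2 : D -> D) (f g : skf D) : skf D :=
  fun m n => \sum_(i < m.+1) \sum_(j < n.+1)
               f i j * iter i s1 (iter j s2 (g (m - i)%N (n - j)%N)).

Definition sk_exp (D : nzRingType) (s1 s2 : D -> D) (f : skf D) (k : nat) : skf D :=
  iter k (sk_mul s1 s2 f) (sk_C 1).

Definition sk_mono (D : nzRingType) (s1 s2 : D -> D) (x1 x2 : skf D) (i j : nat)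
  : skf D :=
  sk_mul s1 s2 (sk_exp s1 s2 x1 i) (sk_exp s1 s2 x2 j).

Definition sk_lincomb (D : nzRingType) (s1 s2 : D -> D) (N : nat)
  (c : nat -> nat -> D) (x1 x2 : skf D) : skf D :=
  fun m n => \sum_(i < N) \sum_(j < N) c i j * sk_mono s1 s2 x1 x2 i j m n.

Inductive in_I (D : nzRingType) (s1 s2 : D -> D) : skf D -> Prop :=
| I_gen : in_I s1 s2 (sk_t1t2 D)
| I_zero : in_I s1 s2 (sk_zero D)
| I_add f g : in_I s1 s2 f -> in_I s1 s2 g -> in_I s1 s2 (sk_add f g)
| I_mull a f : finsupp a -> in_I s1 s2 f -> in_I s1 s2 (sk_mul s1 s2 a f)
| I_mulr f a : finsupp a -> in_I s1 s2 f -> in_I s1 s2 (sk_mul s1 s2 f a)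
| I_ext f g : in_I s1 s2 f -> (forall i j, f i j = g i j) -> in_I s1 s2 g.

From HB Require Import structures.
From mathcomp Require Import all_boot all_order all_algebra.
From mathcomp Require Import zify.
Import Order.TTheory GRing.Theory.
Local Open Scope ring_scope.

(* Modulo I every monomial t1^i t2^j with i, j > 0 vanishes, so an element of T
   lies in I as soon as its coefficients on the two axes i = 0 and j = 0 vanish.
   If x1 and x2 have total degree < A, the monomials x1^i x2^j with i, j < N have
   total degree < B = 2NA + 2, so their axis coefficients are 2B left D-linear
   forms; for N = 4A + 4 there are N^2 > 2B monomials, and Gaussian elimination
   over the division ring D gives a nontrivial left relation among them modulo I. *)

Set Implicit Arguments.
Unset Strict Implicit.
Unset Printing Implicit Defensive.

Section LeftLinearRelations.

Variable D : unitRingType.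
Hypothesis unitD : forall x : D, x != 0 -> x \is a GRing.unit.

Lemma nontrivial_left_relation_ord m n (v : 'I_n -> nat -> D) : (m < n)%N ->
  exists2 c : 'I_n -> D, exists k, c k != 0 &
    forall r, (r < m)%N -> \sum_k c k * v k r = 0.
Proof.
elim: m n v => [|m IH] n v lt_mn.
  by exists (fun=> 1) => //; exists (Ordinal lt_mn); rewrite oner_neq0.
have [k0 /unitD u_unit | v_m0] := pickP (fun k => v k m != 0); last first.
  have [c nz_c c_rel] := IH n v (ltnW lt_mn).
  exists c => // r; rewrite ltnS leq_eqVlt => /predU1P[-> | /c_rel //].
  by apply: big1 => k _; move/negbFE: (v_m0 k) => /eqP ->; rewrite mulr0.
set u := v k0 m in u_unit.
(* Eliminate the unknown [k0] from the first [m] equations using equation [m]. *)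
pose w (j : 'I_n.-1) r := v (lift k0 j) r - v (lift k0 j) m * u^-1 * v k0 r.
have w_m0 j : w j m = 0 by rewrite /w -mulrA mulVr ?mulr1 ?subrr.
have [d [j0 nz_dj0] d_rel] := IH n.-1 w ltac:(lia).
pose c k := if unlift k0 k is Some j then d j
            else - (\sum_j d j * v (lift k0 j) m) * u^-1.
exists c; first by exists (lift k0 j0); rewrite /c liftK.
have c_w r : \sum_k c k * v k r = \sum_j d j * w j r.
  rewrite (bigD1_ord k0) //= /c unlift_none; under eq_bigr do rewrite liftK.
  under [RHS]eq_bigr do rewrite mulrBr; rewrite sumrB addrC.
  rewrite !mulNr !mulr_suml; congr (_ - _).
  by apply: eq_bigr => j _; rewrite !mulrA.
move=> r; rewrite ltnS leq_eqVlt c_w => /predU1P[-> | /d_rel //].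
by apply: big1 => j _; rewrite w_m0 mulr0.
Qed.

Lemma nontrivial_left_relation (I J : finType) (v : I -> J -> D) :
  (#|J| < #|I|)%N ->
  exists2 c : I -> D, exists i, c i != 0 & forall j, \sum_i c i * v i j = 0.
Proof.
move=> ltJI.
pose v' (k : 'I_#|I|) r :=
  if insub r is Some r' then v (enum_val k) (enum_val (r' : 'I_#|J|)) else 0.
have [c [k nz_ck] c_rel] := nontrivial_left_relation_ord v' ltJI.
exists (c \o enum_rank); first by exists (enum_val k); rewrite /= enum_valK.
move=> j; rewrite -[RHS](c_rel _ (ltn_ord (enum_rank j))).
rewrite (reindex (@enum_val I I)) /=; last exact/onW_bij/enum_val_bij.
by apply: eq_bigr => i _; rewrite /v' valK enum_rankK enum_valK.
Qed.

End LeftLinearRelations.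

Section SkewPolynomials.

Variable D : nzRingType.
Variables s1 s2 : {rmorphism D -> D}.

Definition sk_deg_lt (f : skf D) (n : nat) :=
  forall i j, (n <= i + j)%N -> f i j = 0.

Definition sk_mon (a : D) (p q : nat) : skf D :=
  fun i j => if (i == p) && (j == q) then a else 0.

Lemma sk_deg_lt_le f m n : sk_deg_lt f m -> (m <= n)%N -> sk_deg_lt f n.
Proof. by move=> deg_f le_mn i j le_nij; apply: deg_f; apply: leq_trans le_nij. Qed.

Lemma sk_deg_lt_C c : sk_deg_lt (sk_C c) 1.
Proof. by case=> [|i] [|j]. Qed.

Lemma sk_deg_lt_mul f g m n :
  sk_deg_lt f m -> sk_deg_lt g n -> sk_deg_lt (sk_mul s1 s2 f g) (m + n).
Proof.
move=> deg_f deg_g p q le_mn_pq; apply: big1 => i _; apply: big1 => j _.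
have [le_m_ij | lt_ij_m] := leqP m (i + j); first by rewrite deg_f ?mul0r.
rewrite deg_g ?(iter_fix _ (rmorph0 s2)) ?(iter_fix _ (rmorph0 s1)) ?mulr0 //.
by have := ltn_ord i; have := ltn_ord j; lia.
Qed.

Lemma sk_deg_lt_exp f n k :
  sk_deg_lt f n -> sk_deg_lt (sk_exp s1 s2 f k) (k * n + 1).
Proof.
move=> deg_f; elim: k => [|k IH]; first exact: sk_deg_lt_C.
by apply: sk_deg_lt_le (sk_deg_lt_mul deg_f IH) _; rewrite mulSn addnA.
Qed.

Lemma sk_deg_lt_mono x1 x2 n k l : sk_deg_lt x1 n -> sk_deg_lt x2 n ->
  sk_deg_lt (sk_mono s1 s2 x1 x2 k l) ((k + l) * n + 2).
Proof.
move=> deg_x1 deg_x2.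
have deg_mul :=
  sk_deg_lt_mul (sk_deg_lt_exp (k := k) deg_x1) (sk_deg_lt_exp (k := l) deg_x2).
by apply: sk_deg_lt_le deg_mul _; lia.
Qed.

Lemma sk_mon_finsupp a p q : finsupp (sk_mon a p q).
Proof.
exists (p + q).+1 => i j lt_pq_ij; rewrite /sk_mon.
by case: eqP => [ip|//]; case: eqP => [jq|//]; lia.
Qed.

Lemma sk_mon0 p q i j : sk_mon 0 p q i j = 0.
Proof. by rewrite /sk_mon if_same. Qed.

Lemma sk_mul_monl a p q g m n :
  sk_mul s1 s2 (sk_mon a p q) g m n =
  if (p <= m)%N && (q <= n)%N then a * iter p s1 (iter q s2 (g (m - p)%N (n - q)%N))
  else 0.
Proof.
pose X i j := iter i s1 (iter j s2 (g (m - i)%N (n - j)%N)).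
transitivity
  (\sum_(i < m.+1 | i == p :> nat) \sum_(j < n.+1 | j == q :> nat) a * X i j).
  rewrite /sk_mul [RHS]big_mkcond; apply: eq_bigr => i _; rewrite /sk_mon /=.
  case: eqP => _ /=; last by apply: big1 => j _; rewrite mul0r.
  by rewrite [RHS]big_mkcond; apply: eq_bigr => j _; case: eqP => _; rewrite ?mul0r.
rewrite (big_ord1_eq _ (fun i => \sum_(j < n.+1 | j == q :> nat) a * X i j)).
by rewrite (big_ord1_eq _ (fun j => a * X p j)) !ltnS; case: (p <= m)%N.
Qed.

Lemma sk_mul_mon_t1t2 a p q m n :
  sk_mul s1 s2 (sk_mon a p q) (sk_t1t2 D) m n = sk_mon a p.+1 q.+1 m n.
Proof.
rewrite sk_mul_monl /sk_t1t2 /sk_mon.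
case: ifP => [/andP[le_pm le_qn] | not_le]; last first.
  by case: ifP => // /andP[/eqP mp /eqP nq]; move: not_le; rewrite mp nq !leqnSn.
have -> : ((m - p == 1) && (n - q == 1))%N = (m == p.+1) && (n == q.+1).
  by apply/idP/idP => /andP[/eqP ? /eqP ?]; apply/andP; split; apply/eqP; lia.
case: ifP => _.
  by rewrite (iter_fix _ (rmorph1 s2)) (iter_fix _ (rmorph1 s1)) mulr1.
by rewrite (iter_fix _ (rmorph0 s2)) (iter_fix _ (rmorph0 s1)) mulr0.
Qed.

Lemma sk_coef_sum_mon f N m n : sk_deg_lt f N ->
  f m n = \sum_(k : 'I_N * 'I_N) sk_mon (f k.1 k.2) k.1 k.2 m n.
Proof.
move=> deg_f; have [/andP[lt_mN lt_nN] | not_lt] := boolP ((m < N) && (n < N))%N.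
  rewrite (bigD1 (Ordinal lt_mN, Ordinal lt_nN)) //= /sk_mon !eqxx big1 ?addr0 //.
  by move=> [i j]; rewrite xpair_eqE -!val_eqE (eq_sym m) (eq_sym n) => /negbTE ->.
rewrite deg_f; last by move: not_lt; rewrite negb_and -!leqNgt; lia.
apply/esym/big1 => -[i j] _; rewrite /sk_mon /=.
by case: eqP not_lt => [->|//]; case: eqP => [->|//]; rewrite !ltn_ord.
Qed.

Lemma in_I_sum (T : Type) (s : seq T) (F : T -> skf D) :
  (forall k, in_I s1 s2 (F k)) -> in_I s1 s2 (fun m n => \sum_(k <- s) F k m n).
Proof.
move=> F_I; elim: s => [|k s IH].
  by apply: I_ext (I_zero _ _) _ => m n; rewrite big_nil.
by apply: I_ext (I_add (F_I k) IH) _ => m n; rewrite big_cons.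
Qed.

Lemma in_I_of_axes0 f N : sk_deg_lt f N ->
  (forall r, (r < N)%N -> f r 0%N = 0) -> (forall r, (r < N)%N -> f 0%N r = 0) ->
  in_I s1 s2 f.
Proof.
move=> deg_f f_r0 f_0r.
have {}f_r0 r : f r 0%N = 0.
  by have [/f_r0 // | le_Nr] := ltnP r N; apply: deg_f; rewrite addn0.
have {}f_0r r : f 0%N r = 0 by have [/f_0r // | le_Nr] := ltnP r N; apply: deg_f.
(* f = sum of the (f p q) t1^(p-1) t2^(q-1) * t1 t2 over p, q > 0. *)
pose G (k : 'I_N * 'I_N) :=
  sk_mul s1 s2 (sk_mon (f k.1 k.2) k.1.-1 k.2.-1) (sk_t1t2 D).
apply: I_ext (in_I_sum (index_enum _) (F := G) _) _ => [k | m n].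
  exact: I_mull (sk_mon_finsupp _ _ _) (I_gen _ _).
rewrite [RHS](sk_coef_sum_mon m n deg_f); apply: eq_bigr => -[i j] _.
rewrite /G sk_mul_mon_t1t2 /=.
have [-> | i_gt0] := posnP i; first by rewrite f_0r !sk_mon0.
have [-> | j_gt0] := posnP j; first by rewrite f_r0 !sk_mon0.
by rewrite !prednK.
Qed.

Lemma sk_lincomb_pairE N c x1 x2 m n :
  sk_lincomb s1 s2 N c x1 x2 m n =
  \sum_(k : 'I_N * 'I_N) c k.1 k.2 * sk_mono s1 s2 x1 x2 k.1 k.2 m n.
Proof. by rewrite /sk_lincomb pair_bigA. Qed.

End SkewPolynomials.

Unset Implicit Arguments.

Theorem lemma5p9
  (D : unitRingType)
  (hD : forall x : D, x != 0 -> x \is a GRing.unit)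
  (s1 s2 : {rmorphism D -> D})
  (bij1 : bijective s1) (bij2 : bijective s2)
  (comm12 : forall a : D, s1 (s2 a) = s2 (s1 a))
  (x1 x2 : skf D)
  (hx1 : finsupp x1) (hx2 : finsupp x2)
  (hcomm : in_I s1 s2 (sk_sub (sk_mul s1 s2 x1 x2) (sk_mul s1 s2 x2 x1))) :
  exists (N : nat) (c : nat -> nat -> D),
    (exists i j : nat, [/\ (i < N)%N, (j < N)%N & c i j != 0]) /\
    in_I s1 s2 (sk_lincomb s1 s2 N c x1 x2).
Proof.
have [n1 deg_x1] := hx1; have [n2 deg_x2] := hx2.
pose A := (n1 + n2)%N; pose N := (4 * A).+4; pose B := (2 * N * A + 2)%N.
have deg_mono (k : 'I_N * 'I_N) : sk_deg_lt (sk_mono s1 s2 x1 x2 k.1 k.2) B.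
  have deg_x1A := sk_deg_lt_le deg_x1 (leq_addr n2 n1).
  have deg_x2A := sk_deg_lt_le deg_x2 (leq_addl n1 n2).
  apply: sk_deg_lt_le (sk_deg_lt_mono s1 s2 (k := k.1) (l := k.2) deg_x1A deg_x2A) _.
  by have := ltn_ord k.1; have := ltn_ord k.2; nia.
pose v (k : 'I_N * 'I_N) (r : 'I_B + 'I_B) :=
  match r with
  | inl i => sk_mono s1 s2 x1 x2 k.1 k.2 i 0%N
  | inr j => sk_mono s1 s2 x1 x2 k.1 k.2 0%N j
  end.
have [|c [k nz_ck] c_rel] := nontrivial_left_relation hD v.
  by rewrite card_sum card_prod !card_ord; nia.
exists N, (fun i j => c (inord i, inord j)); split.
  by exists k.1, k.2; rewrite !inord_val -surjective_pairing.
have lincombE m n : sk_lincomb s1 s2 N (fun i j => c (inord i, inord j)) x1 x2 m n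
    = \sum_k c k * sk_mono s1 s2 x1 x2 k.1 k.2 m n.
  by rewrite sk_lincomb_pairE; apply: eq_bigr => -[i j] _; rewrite !inord_val.
apply: (in_I_of_axes0 s1 s2 (N := B)) => [m n le_Bmn | r lt_rB | r lt_rB];
  rewrite lincombE.
- by apply: big1 => k' _; rewrite deg_mono ?mulr0.
- exact: (c_rel (inl (Ordinal lt_rB))).
- exact: (c_rel (inr (Ordinal lt_rB))).
Qed.
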